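(* Let $g:\mathbb{R}^r\to\mathbb{R}^{\ell}$ and $m:\mathcal{A}\to\mathbb{R}^{\ell}$ (with $\mathcal{A}\subset\mathbb{R}^s$) be given vector-valued functions, let $\{P_1(\cdot|\theta):\theta\in\Theta\}$, $\Theta\subset\mathbb{R}^d$, be a parametric family of probability measures on $(\mathbb{R}^r,\mathcal{B}(\mathbb{R}^r))$, and for $\alpha\in\mathcal{A}$ let $$\mathcal{M}_\alpha=\Big\{Q \text{ finite signed measure on } \mathbb{R}^r:\ \int dQ=1,\ \int g\,dQ=m(\alpha)\Big\}.$$ Let $P_T$ be a given mixture distribution of the form $P_T=\lambda^*P_1(\cdot|\theta^* )+(1-\lambda^* )P_0^*$ with $\lambda^*\in(0,1)$, $\theta^*\in\Theta$, $P_0^*\in\mathcal{M}_{\alpha^*}$, $\alpha^*\in\mathcal{A}$. Put $m^*=\int g(x)\,dP_T(x)$ and $m_1(\theta)=\int g(x)\,dP_1(x|\theta)$. Suppose that the system of equations $$\frac{1}{1-\lambda}m^*-\frac{\lambda}{1-\lambda}m_1(\theta)=m(\alpha)$$ in the unknowns $(\lambda,\theta,\alpha)\in(0,1)\times\Theta\times\mathcal{A}$ has a unique solution $(\lambda^*,\theta^*,\alpha^* )$. Then whenever $$P_T=\lambda P_1(\cdot|\theta)+(1-\lambda)P_0=\tilde\lambda P_1(\cdot|\tilde\theta)+(1-\tilde\lambda)\tilde P_0$$ with $\lambda,\tilde\lambda\in(0,1)$, $\theta,\tilde\theta\in\Theta$, $P_0\in\mathcal{M}_\alpha$, $\tilde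 P_0\in\mathcal{M}_{\tilde\alpha}$, $\alpha,\tilde\alpha\in\mathcal A$, we have $\lambda=\tilde\lambda$, $\theta=\tilde\theta$ and $P_0=\tilde P_0$; i.e. the semiparametric mixture model is identifiable at $P_T$.
   Context: A two-component semiparametric mixture model subject to linear constraints is a probability measure of the form $P(\cdot|\phi)=\lambda P_1(\cdot|\theta)+(1-\lambda)P_0$ with $\phi=(\lambda,\theta,\alpha)$, $\lambda\in(0,1)$, $\theta\in\Theta$, and $P_0\in\mathcal{M}_\alpha$. It is called identifiable if any two such representations of the same measure have equal $\lambda$, equal $\theta$ and equal $P_0$. *)

From HB Require Import structures.
From mathcomp Require Import all_boot all_order all_algebra.
From mathcomp Require Import all_classical all_reals all_analysis.
Set Implicit Arguments. Unset Strict Implicit. Unset Printing Implicit Defensive.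
Import Order.TTheory GRing.Theory Num.Theory.
Import numFieldNormedType.Exports.
Local Open Scope classical_set_scope.
Local Open Scope ring_scope.

(* Sample space R^r is r.-tuple R with its product (= Borel) sigma-algebra.
   Finite signed measures are MathComp-Analysis charges (finite-valued).
   Integration against a signed measure is defined through its Jordan
   decomposition Q = Q^+ - Q^-, obtained from a (chosen) Hahn decomposition. *)

Section signed_integration.
Context (d : measure_display) (T : measurableType d) (R : realType).

Definition hahn_pair (Q : {charge set T -> \bar R}) : {PN : set T * set T | hahn_decomposition Q PN.1 PN.2}.
Proof.
have /cid [P HP] := Hahn_decomposition Q.
have /cid [N HN] := HP.
by exists (P, N).
Defined.

Definition jpos (Q : {charge set T -> \bar R}) := jordan_pos (svalP (hahn_pair Q)).
Definition jneg (Q : {charge set T -> \bar R}) := jordan_neg (svalP (hahn_pair Q)).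

Definition s_integrable (Q : {charge set T -> \bar R}) (f : T -> R) : Prop :=
  (jpos Q).-integrable setT (EFin \o f) /\ (jneg Q).-integrable setT (EFin \o f).

Definition s_integral (Q : {charge set T -> \bar R}) (f : T -> R) : \bar R :=
  (\int[jpos Q]_x (f x)%:E - \int[jneg Q]_x (f x)%:E)%E.

End signed_integration.

Definition M_set (R : realType) (r l s : nat)
  (g : r.-tuple R -> 'rV[R]_l) (m : 'rV[R]_s -> 'rV[R]_l) (alpha : 'rV[R]_s)
  (Q : {charge set (r.-tuple R) -> \bar R}) : Prop :=
  Q [set: r.-tuple R] = 1%:E /\
  forall i : 'I_l, s_integrable Q (fun x => g x 0 i) /\
                   s_integral Q (fun x => g x 0 i) = (m alpha 0 i)%:E.

Definition s_vint (R : realType) (r l : nat) (g : r.-tuple R -> 'rV[R]_l)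
  (Q : {charge set (r.-tuple R) -> \bar R}) : 'rV[R]_l :=
  \row_(i < l) fine (s_integral Q (fun x => g x 0 i)).

Definition p_vint (R : realType) (r l : nat) (g : r.-tuple R -> 'rV[R]_l)
  (P : probability (r.-tuple R) R) : 'rV[R]_l :=
  \row_(i < l) fine (\int[P]_x (g x 0 i)%:E)%E.

(** Integrating g against a representation P_T = λ P_1(·|θ) + (1 - λ) P_0 with
    P_0 ∈ M_α shows that (λ, θ, α) solves the moment equation, so uniqueness of
    its solution forces λ = λ* and θ = θ*, after which P_0 is read off from P_T.
    The analytic content is the linearity of the signed integral along the
    mixture: if a charge Q satisfies Q + ν = μ for measures μ, ν, then its
    Jordan parts satisfy Q⁺ ≤ μ, Q⁻ ≤ ν and Q⁺ + ν = μ + Q⁻, whence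
    ∫ f dQ = ∫ f dμ - ∫ f dν; for Q = a P_1 + b P_0 take μ = a P_1 + b P_0⁺
    and ν = b P_0⁻. *)

From HB Require Import structures.
From mathcomp Require Import all_boot all_order all_algebra.
From mathcomp Require Import all_classical all_reals all_analysis.
From mathcomp Require Import measurable_realfun ring lra.
Set Implicit Arguments. Unset Strict Implicit. Unset Printing Implicit Defensive.
Import Order.TTheory GRing.Theory Num.Theory.
Import numFieldNormedType.Exports.
Local Open Scope classical_set_scope.
Local Open Scope ring_scope.

Section integral_measure_operations.
Context d (T : measurableType d) (R : realType).
Local Open Scope ereal_scope.
Implicit Types (m mu nu : {measure set T -> \bar R}) (f : T -> \bar R).

Lemma le_measure_integrable mu nu f :
  (forall E, measurable E -> mu E <= nu E) ->
  nu.-integrable setT f -> mu.-integrable setT f.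
Proof.
move=> le_mu_nu /integrableP[mf fint]; apply/integrableP; split => //.
apply: le_lt_trans fint; apply: ge0_le_measure_integral => //.
exact: measurableT_comp.
Qed.

Lemma integrable_mscale (k : {nonneg R}) m f :
  m.-integrable setT f -> (mscale k m).-integrable setT f.
Proof.
move=> /integrableP[mf fint]; apply/integrableP; split => //.
rewrite ge0_integral_mscale//; last exact: measurableT_comp.
by rewrite lte_mul_pinfty.
Qed.

Lemma integral_mscale (k : {nonneg R}) m f : m.-integrable setT f ->
  \int[mscale k m]_x f x = k%:num%:E * \int[m]_x f x.
Proof.
move=> fint; have mf := measurable_int _ fint.
have fneg : \int[m]_x f^\- x \is a fin_num := integrable_neg_fin_num measurableT fint.
rewrite (integralE (mscale k m)) (integralE m) !ge0_integral_mscale//.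
- by rewrite -muleBr ?fin_num_adde_defl ?fin_numN.
- exact: measurable_funeneg.
- exact: measurable_funepos.
Qed.

Lemma integrable_measure_add mu nu f : mu.-integrable setT f ->
  nu.-integrable setT f -> (measure_add mu nu).-integrable setT f.
Proof.
move=> /integrableP[mf f1] /integrableP[_ f2]; apply/integrableP; split => //.
rewrite ge0_integral_measure_add//; last exact: measurableT_comp.
by rewrite lte_add_pinfty.
Qed.

Lemma integral_measure_add_eq (m1 m2 m3 m4 : {measure set T -> \bar R}) f :
  (forall E, measurable E -> m1 E + m2 E = m3 E + m4 E) ->
  m1.-integrable setT f -> m2.-integrable setT f ->
  m3.-integrable setT f -> m4.-integrable setT f ->
  \int[m1]_x f x + \int[m2]_x f x = \int[m3]_x f x + \int[m4]_x f x.
Proof.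
move=> m1234 m1_f m2_f m3_f m4_f; have mf := measurable_int _ m1_f.
rewrite -!integral_measure_add//.
by apply: eq_measure_integral => E mE _; have := m1234 E mE; rewrite -!measure_addE.
Qed.

End integral_measure_operations.

Section jordan_decomposition.
Context d (T : measurableType d) (R : realType) (Q : {charge set T -> \bar R}).
Local Open Scope ereal_scope.

Let P := (sval (hahn_pair Q)).1.
Let N := (sval (hahn_pair Q)).2.
Let mP : measurable P. Proof. by have [[]] := svalP (hahn_pair Q). Qed.
Let mN : measurable N. Proof. by have [_ []] := svalP (hahn_pair Q). Qed.

Lemma jposE E : measurable E -> jpos Q E = Q (E `&` P).
Proof. by move=> mE; rewrite /jpos jordan_posE cjordan_posE /crestr0 mem_set. Qed.

Lemma jnegE E : measurable E -> jneg Q E = - Q (E `&` N).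
Proof. by move=> mE; rewrite /jneg jordan_negE cjordan_negE /crestr0 mem_set. Qed.

Lemma charge_jordan E : measurable E -> Q E = jpos Q E - jneg Q E.
Proof.
move=> mE; rewrite jposE// jnegE// oppeK.
have [_ _ PNT PN0] := svalP (hahn_pair Q).
exact: charge_partition.
Qed.

Section charge_difference.
Variables mu nu : {measure set T -> \bar R}.
Hypothesis Q_nu_mu : forall E, measurable E -> Q E + nu E = mu E.

Lemma le_jpos E : measurable E -> jpos Q E <= mu E.
Proof.
move=> mE; have mEP : measurable (E `&` P) by exact: measurableI.
rewrite jposE//; apply: (le_trans (leeDl _ (measure_ge0 nu (E `&` P)))).
by rewrite Q_nu_mu// le_measure// inE.
Qed.

Lemma le_jneg E : measurable E -> jneg Q E <= nu E.
Proof.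
move=> mE; have mEN : measurable (E `&` N) by exact: measurableI.
rewrite jnegE//; apply: (@le_trans _ _ (nu (E `&` N))); last by rewrite le_measure// inE.
by rewrite -sube_ge0 ?fin_numN ?fin_num_measure// oppeK addeC Q_nu_mu.
Qed.

Lemma jpos_nu_jneg E : measurable E -> jpos Q E + nu E = mu E + jneg Q E.
Proof.
move=> mE; rewrite -Q_nu_mu// charge_jordan// addeAC subeK//.
exact: fin_num_measure.
Qed.

Variable f : T -> R.
Hypotheses (mu_f : mu.-integrable setT (EFin \o f))
  (nu_f : nu.-integrable setT (EFin \o f)).

Lemma s_integrable_difference : s_integrable Q f.
Proof.
split; [exact: le_measure_integrable le_jpos mu_f|exact: le_measure_integrable le_jneg nu_f].
Qed.

Lemma s_integral_difference :
  s_integral Q f = \int[mu]_x (f x)%:E - \int[nu]_x (f x)%:E.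
Proof.
have [pos_f neg_f] := s_integrable_difference.
have := integral_measure_add_eq jpos_nu_jneg pos_f nu_f mu_f neg_f.
have fin_int (m : {measure set T -> \bar R}) : m.-integrable setT (EFin \o f) ->
    \int[m]_x (f x)%:E \is a fin_num by exact: integrable_fin_num.
rewrite /s_integral /comp.
rewrite -[\int[jpos Q]_x _](fineK (fin_int _ pos_f)).
rewrite -[\int[jneg Q]_x _](fineK (fin_int _ neg_f)).
rewrite -[\int[mu]_x _](fineK (fin_int _ mu_f)).
rewrite -[\int[nu]_x _](fineK (fin_int _ nu_f)).
by rewrite -!EFinD => -[eq_int]; congr EFin; lra.
Qed.

End charge_difference.
End jordan_decomposition.

Section mixture.
Context d (T : measurableType d) (R : realType).
Variables (P1 : {finite_measure set T -> \bar R}) (Q0 Q : {charge set T -> \bar R}).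
Variables (a b : R) (a_ge0 : 0 <= a) (b_ge0 : 0 <= b).
Hypothesis QE : forall E, measurable E -> Q E = (a%:E * P1 E + b%:E * Q0 E)%E.
Local Open Scope ereal_scope.

Let mu : {measure set T -> \bar R} :=
  measure_add (mscale (NngNum a_ge0) P1) (mscale (NngNum b_ge0) (jpos Q0)).
Let nu : {measure set T -> \bar R} := mscale (NngNum b_ge0) (jneg Q0).

Let Q_nu_mu E : measurable E -> Q E + nu E = mu E.
Proof.
move=> mE; have -> : nu E = b%:E * jneg Q0 E by [].
have -> : mu E = a%:E * P1 E + b%:E * jpos Q0 E by exact: measure_addE.
rewrite QE// (charge_jordan Q0 mE).
rewrite -[P1 E](fineK (fin_num_measure P1 E mE)).
rewrite -[jpos Q0 E](fineK (fin_num_measure (jpos Q0) E mE)).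
rewrite -[jneg Q0 E](fineK (fin_num_measure (jneg Q0) E mE)).
by rewrite -EFinN -EFinD -!EFinM -!EFinD; congr EFin; ring.
Qed.

Variable f : T -> R.
Hypotheses (P1_f : P1.-integrable setT (EFin \o f)) (Q0_f : s_integrable Q0 f).

Let mu_f : mu.-integrable setT (EFin \o f).
Proof. by apply: integrable_measure_add; apply: integrable_mscale; case: Q0_f. Qed.

Let nu_f : nu.-integrable setT (EFin \o f).
Proof. by apply: integrable_mscale; case: Q0_f. Qed.

Lemma s_integral_mixture :
  s_integral Q f = a%:E * \int[P1]_x (f x)%:E + b%:E * s_integral Q0 f.
Proof.
have [pos_f neg_f] := Q0_f.
rewrite (s_integral_difference Q_nu_mu mu_f nu_f) /mu /nu.
rewrite integral_measure_add ?integrable_mscale// !integral_mscale//=.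
rewrite /s_integral -addeA -muleBr// fin_num_adde_defl// fin_numN.
exact: integrable_fin_num.
Qed.

End mixture.

Lemma mixture_moment_equation (R : realType) (r l s : nat)
  (g : r.-tuple R -> 'rV[R]_l) (m : 'rV[R]_s -> 'rV[R]_l)
  (P1 : probability (r.-tuple R) R) (PT P0 : {charge set (r.-tuple R) -> \bar R})
  (lam : R) (alpha : 'rV[R]_s) :
  0 <= lam < 1 ->
  (forall i : 'I_l, P1.-integrable setT (fun x => (g x 0 i)%:E)) ->
  M_set g m alpha P0 ->
  (forall E, measurable E -> PT E = (lam%:E * P1 E + (1 - lam)%:E * P0 E)%E) ->
  (1 - lam)^-1 *: s_vint g PT - (lam / (1 - lam)) *: p_vint g P1 = m alpha.
Proof.
move=> /andP[lam_ge0 lam_lt1] P1_g [_ P0_g] PTE.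
have lam1_gt0 : 0 < 1 - lam by rewrite subr_gt0.
apply/rowP => i; rewrite !mxE.
have [P0_gi P0_giE] := P0_g i.
rewrite (s_integral_mixture lam_ge0 (ltW lam1_gt0) PTE (P1_g i) P0_gi) P0_giE.
rewrite -[(\int[P1]_x _)%E](fineK (integrable_fin_num measurableT (P1_g i))) /=.
by field; rewrite gt_eqF.
Qed.

Theorem proposition1 (R : realType) (r l s d : nat)
  (g : r.-tuple R -> 'rV[R]_l) (A : set 'rV[R]_s) (m : 'rV[R]_s -> 'rV[R]_l)
  (Theta : set 'rV[R]_d) (P1 : 'rV[R]_d -> probability (r.-tuple R) R)
  (* m_1(theta) = \int g dP_1(.|theta) is a well-defined vector *)
  (hP1g : forall theta, Theta theta -> forall i : 'I_l,
      (P1 theta).-integrable setT (fun x => (g x 0 i)%:E))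
  (PT : {charge set (r.-tuple R) -> \bar R})
  (lam_s : R) (theta_s : 'rV[R]_d) (alpha_s : 'rV[R]_s)
  (P0_s : {charge set (r.-tuple R) -> \bar R})
  (hlam_s : 0 < lam_s < 1) (htheta_s : Theta theta_s) (halpha_s : A alpha_s)
  (hP0_s : M_set g m alpha_s P0_s)
  (hPT : forall E, measurable E ->
      PT E = (lam_s%:E * P1 theta_s E + (1 - lam_s)%:E * P0_s E)%E)
  (huniq :
     let mstar := s_vint g PT in
     let m1 := fun theta => p_vint g (P1 theta) in
     ((1 - lam_s)^-1 *: mstar - (lam_s / (1 - lam_s)) *: m1 theta_s = m alpha_s) /\
     forall (lam : R) (theta : 'rV[R]_d) (alpha : 'rV[R]_s),
       0 < lam < 1 -> Theta theta -> A alpha ->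
       (1 - lam)^-1 *: mstar - (lam / (1 - lam)) *: m1 theta = m alpha ->
       [/\ lam = lam_s, theta = theta_s & alpha = alpha_s]) :
  forall (lam lam' : R) (theta theta' : 'rV[R]_d) (alpha alpha' : 'rV[R]_s)
         (P0 P0' : {charge set (r.-tuple R) -> \bar R}),
    0 < lam < 1 -> 0 < lam' < 1 -> Theta theta -> Theta theta' ->
    A alpha -> A alpha' -> M_set g m alpha P0 -> M_set g m alpha' P0' ->
    (forall E, measurable E ->
       PT E = (lam%:E * P1 theta E + (1 - lam)%:E * P0 E)%E) ->
    (forall E, measurable E ->
       PT E = (lam'%:E * P1 theta' E + (1 - lam')%:E * P0' E)%E) ->
    [/\ lam = lam', theta = theta' & forall E, measurable E -> P0 E = P0' E].
Proof.
move=> lam lam' theta theta' alpha alpha' P0 P0' lam01 lam01' th th' al al'.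
move=> P0M P0M' PTE PTE'.
have le01 (x : R) : 0 < x < 1 -> 0 <= x < 1 by case/andP => /ltW -> ->.
have [_ uniq_sol] := huniq.
have [lamE thetaE _] := uniq_sol _ _ _ lam01 th al
  (mixture_moment_equation (le01 _ lam01) (hP1g _ th) P0M PTE).
have [lam'E theta'E _] := uniq_sol _ _ _ lam01' th' al'
  (mixture_moment_equation (le01 _ lam01') (hP1g _ th') P0M' PTE').
subst lam lam' theta theta'; split=> // E mE.
have := PTE E mE; rewrite PTE'//.
rewrite -[P1 theta_s E](fineK (fin_num_measure _ E mE)).
rewrite -[P0 E](fineK (fin_num_measure _ E mE)) -[P0' E](fineK (fin_num_measure _ E mE)).
rewrite -!EFinM -!EFinD => -[eq_mix]; congr EFin.
have lam1_neq0 : 1 - lam_s != 0 by rewrite subr_eq0 gt_eqF//; case/andP: hlam_s.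
by apply: (mulfI lam1_neq0); lra.
Qed.
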